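(* Let $R$ be a commutative ring, $M$ an $R$-module, and $a\in M^{{\mathbb N}}$ an $R$-recurrence sequence of order $d$. If $a(k)=a(k+m)=a(k+2m)=\cdots=a(k+(d-1)m)=0$ for some $k\in{\mathbb N}$ and some positive integer $m$, then $a(k+im)=0$ for all $i\in{\mathbb N}$.
   Context: ${\mathbb N}=\{0,1,2,\dots\}$. $a\in M^{{\mathbb N}}$ is an $R$-recurrence sequence of order $d$ if $d$ is the smallest integer $\ge0$ for which there are $\gamma_0,\dots,\gamma_{d-1}\in R$ with $a(n+d)=\gamma_{d-1}a(n+d-1)+\cdots+\gamma_0a(n)$ for all $n\in{\mathbb N}$. *)

From mathcomp Require Import all_boot all_order all_algebra.
Set Implicit Arguments. Unset Strict Implicit. Unset Printing Implicit Defensive.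
Import GRing.Theory.
Local Open Scope ring_scope.

Definition satisfies_rec (R : comPzRingType) (M : lmodType R) (a : nat -> M)
  (d : nat) : Prop :=
  exists g : 'I_d -> R, forall n : nat,
    a (n + d)%N = \sum_(i < d) g i *: a (n + i)%N.

Definition is_rec_seq_of_order (R : comPzRingType) (M : lmodType R)
  (a : nat -> M) (d : nat) : Prop :=
  satisfies_rec a d /\ forall d' : nat, satisfies_rec a d' -> (d <= d')%N.

(* Rewriting the recurrence as a(n + t) = row_0(C^t) . (a(n), ..., a(n + d - 1)) for
   the companion matrix C, Cayley-Hamilton for C^m expresses (C^m)^d as a linear
   combination of the (C^m)^j, j < d.  Hence every arithmetic subsequence
   i |-> a(k + i m) again satisfies a recurrence of length d, and a sequence
   satisfying a recurrence of length d whose first d terms vanish is zero. *)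

From HB Require Import structures.
From mathcomp Require Import all_boot all_order all_algebra.
Set Implicit Arguments. Unset Strict Implicit. Unset Printing Implicit Defensive.
Import GRing.Theory.
Local Open Scope ring_scope.

Lemma Cayley_Hamilton_span (R : comNzRingType) n (A : 'M[R]_n.+1) :
  exists c : 'I_n.+1 -> R, A ^+ n.+1 = \sum_(j < n.+1) c j *: A ^+ j.
Proof.
set p := char_poly A.
have size_p : size p = n.+2 by rewrite size_char_poly.
have lead_p : p`_n.+1 = 1.
  by have /monicP := char_poly_monic A; rewrite /lead_coef size_p.
have CH : horner_mx A (\sum_(i < n.+2) p`_i *: 'X^i) = 0.
  by rewrite -poly_def -size_p coefK Cayley_Hamilton.
exists (fun j => - p`_j); move: CH.
rewrite rmorph_sum big_ord_recr /= lead_p horner_mxZ scale1r rmorphXn /=.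
rewrite horner_mx_X => /eqP; rewrite addrC addr_eq0 => /eqP ->.
rewrite -sumrN; apply: eq_bigr => j _.
by rewrite horner_mxZ rmorphXn /= horner_mx_X scaleNr.
Qed.

Section NonZeroRing.
Variables (R : comPzRingType) (R_nontrivial : (1 : R) != 0).

(* The unused argument lets the instance below depend on the proof of 1 != 0. *)
Definition nonzero_ring (_ : (1 : R) != 0) : Type := R.
HB.instance Definition _ := GRing.ComPzRing.on (nonzero_ring R_nontrivial).
HB.instance Definition _ :=
  GRing.PzSemiRing_isNonZero.Build (nonzero_ring R_nontrivial) R_nontrivial.

End NonZeroRing.

Lemma Cayley_Hamilton_span_pz (R : comPzRingType) n (A : 'M[R]_n.+1) :
  exists c : 'I_n.+1 -> R, A ^+ n.+1 = \sum_(j < n.+1) c j *: A ^+ j.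
Proof.
have [R_trivial | R_nontrivial] := eqVneq (1 : R) 0.
  exists (fun _ => 0); rewrite -[LHS]scale1r R_trivial scale0r big1 // => j _.
  by rewrite scale0r.
have [c Ac] := @Cayley_Hamilton_span (nonzero_ring R_nontrivial) n A.
by exists c.
Qed.

Lemma satisfies_rec_eq0 (R : comPzRingType) (M : lmodType R) (b : nat -> M) d :
  satisfies_rec b d -> (forall j, (j < d)%N -> b j = 0) -> forall i, b i = 0.
Proof.
move=> [g rec] b0; elim/ltn_ind => i IH.
have [/b0 // | le_d_i] := ltnP i d.
rewrite -(subnK le_d_i) rec big1 // => j _.
by rewrite IH ?scaler0 // -{2}(subnK le_d_i) ltn_add2l.
Qed.

Section CompanionMatrix.
Variables (R : comPzRingType) (M : lmodType R) (a : nat -> M) (d : nat).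
Variable g : 'I_d.+1 -> R.
Hypothesis rec : forall n, a (n + d.+1)%N = \sum_(i < d.+1) g i *: a (n + i)%N.

Definition companion_mx : 'M[R]_d.+1 :=
  \matrix_(i, j) if (i.+1 < d.+1)%N then ((j : nat) == i.+1)%:R else g j.

Definition window (A : 'M[R]_d.+1) (i : 'I_d.+1) n : M :=
  \sum_j A i j *: a (n + j)%N.

Lemma window_lin_comb (c : 'I_d.+1 -> R) (B : 'I_d.+1 -> 'M[R]_d.+1) i n :
  window (\sum_l c l *: B l) i n = \sum_l c l *: window (B l) i n.
Proof.
rewrite /window; under eq_bigr do rewrite summxE scaler_suml.
rewrite exchange_big /=; apply: eq_bigr => l _.
by rewrite scaler_sumr; apply: eq_bigr => j _; rewrite mxE scalerA.
Qed.

Lemma window_mul (A B : 'M[R]_d.+1) i n :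
  window (A * B) i n = \sum_l A i l *: window B l n.
Proof.
rewrite /window; under eq_bigr do rewrite -mulmxE mxE scaler_suml.
rewrite exchange_big /=; apply: eq_bigr => l _.
by rewrite scaler_sumr; apply: eq_bigr => j _; rewrite scalerA.
Qed.

Lemma window1 i n : window 1 i n = a (n + i)%N.
Proof.
rewrite /window (bigD1 i) //= big1 => [|j /negPf ji].
  by rewrite mxE eqxx scale1r addr0.
by rewrite mxE eq_sym ji scale0r.
Qed.

Lemma window_companion i n : window companion_mx i n = a (n + i.+1)%N.
Proof.
have [lt_i1_d | le_d_i1] := ltnP i.+1 d.+1.
  rewrite /window (bigD1 (Ordinal lt_i1_d)) //= big1 => [|j ji].
    by rewrite mxE lt_i1_d eqxx scale1r addr0.
  have /negPf ji' : (j : nat) != i.+1.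
    by apply: contra ji => /eqP ji; apply/eqP/val_inj.
  by rewrite mxE lt_i1_d ji' scale0r.
have -> : i.+1 = d.+1 by apply/eqP; rewrite eqn_leq le_d_i1 ltn_ord.
by rewrite rec; apply: eq_bigr => j _; rewrite mxE ltnNge le_d_i1.
Qed.

Lemma window_companion_pow t i n : window (companion_mx ^+ t) i n = a (n + i + t)%N.
Proof.
elim: t n => [|t IH] n; first by rewrite expr0 window1 addn0.
have -> : (n + i + t.+1 = n.+1 + i + t)%N by rewrite addnS !addSn.
rewrite exprSr window_mul -IH; apply: eq_bigr => l _.
by rewrite window_companion addnS.
Qed.

End CompanionMatrix.

Lemma satisfies_rec_arith_subseq (R : comPzRingType) (M : lmodType R)
    (a : nat -> M) d k m :
  satisfies_rec a d -> satisfies_rec (fun i => a (k + i * m)%N) d.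
Proof.
case: d => [|d] [g rec].
  exists g => n; rewrite big_ord0.
  by rewrite -[(k + _)%N]addn0 rec big_ord0.
have [c Cc] := Cayley_Hamilton_span_pz (companion_mx g ^+ m).
exists c => n; set N := (k + n * m)%N.
have window_pow j : window a ((companion_mx g ^+ m) ^+ j) ord0 N
                    = a (k + (n + j) * m)%N.
  by rewrite -exprM (window_companion_pow rec) addn0 mulnDl addnA mulnC.
rewrite -window_pow Cc window_lin_comb; apply: eq_bigr => j _.
by rewrite window_pow.
Qed.

Theorem corollary2p2 (R : comPzRingType) (M : lmodType R) (a : nat -> M)
  (d : nat) (k m : nat) :
  is_rec_seq_of_order a d -> (0 < m)%N ->
  (forall j : nat, (j < d)%N -> a (k + j * m)%N = 0) ->
  forall i : nat, a (k + i * m)%N = 0.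
Proof.
move=> [rec _] _.
exact: satisfies_rec_eq0 (satisfies_rec_arith_subseq k m rec).
Qed.
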